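(* For every integer $n\ge 1$, the vertices of \[\mathrm{Newt}(U_n)=\sum_{1\le i<j\le n}\mathrm{conv}\{e_i+e_{n+j},\,e_j+e_{n+i}\}\subseteq\mathbb{R}^{2n}\] are exactly the points $(\pi,\pi^c)-(1,\dots,1)$ for $\pi\in\mathfrak{S}_n$.
   Context: $e_1,\dots,e_{2n}$ are the standard basis vectors of $\mathbb{R}^{2n}$ and the sum is a Minkowski sum. A permutation $\pi=\pi_1\cdots\pi_n\in\mathfrak{S}_n$ is identified with the vector $(\pi_1,\dots,\pi_n)\in\mathbb{R}^n$, and its complement is $\pi^c=(n+1-\pi_1,\dots,n+1-\pi_n)$; $(\pi,\pi^c)\in\mathbb{R}^{2n}$ is the concatenation and $(1,\dots,1)\in\mathbb{R}^{2n}$. *)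

From HB Require Import structures.
From mathcomp Require Import all_boot all_order all_algebra all_fingroup.
From mathcomp Require Import reals.
Set Implicit Arguments. Unset Strict Implicit. Unset Printing Implicit Defensive.
Import Order.TTheory GRing.Theory Num.Theory.
Local Open Scope ring_scope.

Definition dotv (R : realType) (m : nat) (c x : 'rV[R]_m) : R :=
  \sum_(k < m) c 0 k * x 0 k.

Definition is_vertex (R : realType) (m : nat) (S : 'rV[R]_m -> Prop)
  (x : 'rV[R]_m) : Prop :=
  S x /\ exists c : 'rV[R]_m, forall y, S y -> y <> x -> dotv c y < dotv c x.

(* standard basis vectors e_i and e_{n+j} of R^{2n} (0-indexed) *)
Definition eL (R : realType) (n : nat) (i : 'I_n) : 'rV[R]_(n + n) :=
  delta_mx 0 (lshift n i).
Definition eR (R : realType) (n : nat) (j : 'I_n) : 'rV[R]_(n + n) :=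
  delta_mx 0 (rshift n j).

Definition NewtU (R : realType) (n : nat) : 'rV[R]_(n + n) -> Prop :=
  fun x => exists t : 'I_n -> 'I_n -> R,
    (forall i j : 'I_n, (i < j)%N -> 0 <= t i j <= 1) /\
    x = \sum_(i < n) \sum_(j < n | (i < j)%N)
          (t i j *: (eL R i + eR R j) + (1 - t i j) *: (eL R j + eR R i)).

(* (pi, pi^c) - (1,...,1), where pi_i = (val (pi i)).+1 and
   pi^c_i = n + 1 - pi_i *)
Definition perm_point (R : realType) (n : nat) (p : 'S_n) : 'rV[R]_(n + n) :=
  row_mx (\row_(i < n) ((val (p i)).+1)%:R)
         (\row_(i < n) (n.+1 - (val (p i)).+1)%:R)
  - const_mx 1.

From mathcomp Require Import all_boot all_order all_algebra all_fingroup.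
From mathcomp Require Import reals.
From mathcomp Require Import ring lra.
Import Order.TTheory GRing.Theory Num.Theory.
Local Open Scope ring_scope.
Set Implicit Arguments. Unset Strict Implicit. Unset Printing Implicit Defensive.

(* On the segment conv{e_i + e_(n+j), e_j + e_(n+i)} a linear functional c
   takes the values c_i + c_(n+j) and c_j + c_(n+i), which differ by
   g_i - g_j where g_k = c_k - c_(n+k).  So c is maximised over Newt(U_n) by
   taking on every segment the endpoint favoured by the order of g, and this
   maximiser is unique when g is injective.  Breaking ties in g by index, this
   choice of endpoints is made by a permutation p (e_i + e_(n+j) iff
   p_j < p_i), and the resulting point has i-th coordinate #{j | p_j < p_i}
   and (n+j)-th coordinate #{i | p_j < p_i}, i.e. it is (p, p^c) - 1.
   Conversely the functional with g = p exposes that point. *)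

Section DotProduct.
Variables (R : realType) (m : nat) (c : 'rV[R]_m).

Lemma dotvD u v : dotv c (u + v) = dotv c u + dotv c v.
Proof. by rewrite /dotv -big_split; apply: eq_bigr => k _; rewrite mxE mulrDr. Qed.

Lemma dotvZ a u : dotv c (a *: u) = a * dotv c u.
Proof. by rewrite /dotv mulr_sumr; apply: eq_bigr => k _; rewrite mxE mulrCA. Qed.

Lemma dotv0 : dotv c 0 = 0.
Proof. by rewrite -(scale0r 0) dotvZ mul0r. Qed.

Lemma dotv_sum I (r : seq I) (P : pred I) (F : I -> 'rV_m) :
  dotv c (\sum_(i <- r | P i) F i) = \sum_(i <- r | P i) dotv c (F i).
Proof. exact: (big_morph _ dotvD dotv0). Qed.

Lemma dotv_delta k : dotv c (delta_mx 0 k) = c 0 k.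
Proof.
rewrite /dotv (bigD1 k) //= big1 => [|l /negbTE l_neq_k]; rewrite mxE eqxx /=.
  by rewrite eqxx mulr1 addr0.
by rewrite l_neq_k mulr0.
Qed.

End DotProduct.

Lemma sum_pairs_sym (V : nmodType) n (h : 'I_n -> 'I_n -> V) :
  (forall i, h i i = 0) ->
  \sum_(i < n) \sum_(j < n | (i < j)%N) (h i j + h j i) = \sum_(i < n) \sum_(j < n) h i j.
Proof.
move=> h_diag.
have lower : \sum_(i < n) \sum_(j < n | (i < j)%N) h j i =
             \sum_(i < n) \sum_(j < n | (j < i)%N) h i j.
  exact: (exchange_big_dep xpredT).
under eq_bigr do rewrite big_split.
rewrite big_split /= lower -big_split /=.
apply: eq_bigr => i _; rewrite [RHS](bigID (fun j : 'I_n => (i < j)%N)) /=; congr (_ + _).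
rewrite [RHS](bigD1 i) ?ltnn //= h_diag add0r; apply: eq_bigl => j.
by rewrite -leqNgt ltn_neqAle andbC.
Qed.

Lemma ltr_sum_pairs (R : numDomainType) n (F G : 'I_n -> 'I_n -> R) (i0 j0 : 'I_n) :
  (i0 < j0)%N -> (forall i j : 'I_n, (i < j)%N -> F i j <= G i j) ->
  F i0 j0 < G i0 j0 ->
  \sum_(i < n) \sum_(j < n | (i < j)%N) F i j < \sum_(i < n) \sum_(j < n | (i < j)%N) G i j.
Proof.
move=> i0_lt_j0 le_FG lt_FG.
rewrite (bigD1 i0) //= [X in _ < X](bigD1 i0) //=; apply: ltr_leD.
  rewrite (bigD1 j0) //= [X in _ < X](bigD1 j0) //=; apply: ltr_leD => //.
  by apply: ler_sum => j /andP[+ _]; exact: le_FG.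
by apply: ler_sum => i _; apply: ler_sum => j; exact: le_FG.
Qed.

Lemma sum_indicator_lt (R : numDomainType) n (v : nat) : (v <= n)%N ->
  \sum_(k < n) (if (k < v)%N then 1 else 0 : R) = v%:R.
Proof.
by move=> v_le_n; rewrite -big_mkcond -(big_ord_widen n (fun=> 1) v_le_n) sumr_const card_ord.
Qed.

Lemma sum_indicator_gt (R : numDomainType) n (v : nat) : (v < n)%N ->
  \sum_(k < n) (if (v < k)%N then 1 else 0 : R) = (n - v.+1)%:R.
Proof.
move=> v_lt_n; apply: (addrI (v.+1%:R)).
rewrite -natrD subnKC // -(sum_indicator_lt _ v_lt_n) -big_split /=.
rewrite -[in RHS](card_ord n) -sumr_const; apply: eq_bigr => k _.
by rewrite ltnNge; case: leqP; rewrite ?addr0 ?add0r.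
Qed.

Lemma perm_of_strict_total n (r : rel 'I_n) :
  irreflexive r -> transitive r -> (forall l k, l != k -> r l k || r k l) ->
  exists p : 'S_n, forall l k, r l k = (p l < p k)%N.
Proof.
move=> r_irr r_trans r_total.
pose below k := [set l | r l k].
have below_proper k : below k \proper [set: 'I_n].
  by rewrite properT; apply/eqP => /setP/(_ k); rewrite !inE r_irr.
have rank_lt k : (#|below k| < n)%N.
  by rewrite -[X in (_ < X)%N]card_ord -cardsT proper_card.
have rank_mono l k : r l k -> (#|below l| < #|below k|)%N.
  move=> r_lk; apply/proper_card/properP; split.
    by apply/subsetP => m; rewrite !inE => /r_trans; apply.
  by exists l; rewrite !inE ?r_lk ?r_irr.
have rank_inj : injective (fun k => Ordinal (rank_lt k)).
  move=> l k [eq_rank]; apply/eqP; apply: contraT => /r_total.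
  by case/orP => /rank_mono; rewrite eq_rank ltnn.
exists (perm rank_inj) => l k; rewrite !permE /=.
apply/idP/idP => [|lt_lk]; first exact: rank_mono.
have /r_total : l != k by apply: contraTneq lt_lk => ->; rewrite ltnn.
by case/orP => // /rank_mono; rewrite ltnNge (ltnW lt_lk).
Qed.

Lemma perm_rank d (T : orderType d) n (a : 'I_n -> T) :
  exists p : 'S_n, forall i j : 'I_n, (i < j)%N -> (a j < a i)%O = (p j < p i)%N.
Proof.
pose key k : T *l nat := (a k, val k).
have key_inj : injective key by move=> l k [_ /val_inj].
have [|||p p_key] := @perm_of_strict_total n (fun l k => key l < key k)%O.
- by move=> k; rewrite /= ltxx.
- by move=> k l m; apply: lt_trans.
- by move=> l k; rewrite -(inj_eq key_inj); apply: lt_total.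
exists p => i j i_lt_j; rewrite -p_key ltEprodlexi /=.
have /negbTE -> : ~~ (val j < val i)%O by rewrite -leNgt ltW.
by rewrite implybF lt_leAnge.
Qed.

Lemma ler_step_mul (R : realDomainType) (s x y : R) : 0 <= s <= 1 ->
  s * (x - y) <= (if y < x then 1 else 0) * (x - y).
Proof. by move=> /andP[s_ge0 s_le1]; case: ltrP => cmp; nra. Qed.

Lemma ltr_step_mul (R : realDomainType) (s x y : R) : 0 <= s <= 1 ->
  x != y -> s != (if y < x then 1 else 0) ->
  s * (x - y) < (if y < x then 1 else 0) * (x - y).
Proof.
move=> /andP[s_ge0 s_le1] x_neq_y; case: ltrP => cmp s_neq.
- have s_lt1 : s < 1 by rewrite lt_neqAle s_neq.
  nra.
- have x_lt_y : x < y by rewrite lt_neqAle x_neq_y.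
  have s_gt0 : 0 < s by rewrite lt_neqAle eq_sym s_neq.
  nra.
Qed.

Section NewtonPolytope.
Variables (R : realType) (n : nat).
Implicit Types (t : 'I_n -> 'I_n -> R) (a b : 'I_n -> R) (c : 'rV[R]_(n + n)).

Definition newtU_point t : 'rV[R]_(n + n) :=
  \sum_(i < n) \sum_(j < n | (i < j)%N)
     (t i j *: (eL R i + eR R j) + (1 - t i j) *: (eL R j + eR R i)).

Definition unit_weights t := forall i j : 'I_n, (i < j)%N -> 0 <= t i j <= 1.

Definition gap c (k : 'I_n) : R := c 0 (lshift n k) - c 0 (rshift n k).

Definition orient a (i j : 'I_n) : R := if a j < a i then 1 else 0.

Lemma orient_diag a i : orient a i i = 0.
Proof. by rewrite /orient ltxx. Qed.

Lemma orientN a i j : a i != a j -> 1 - orient a i j = orient a j i.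
Proof.
rewrite /orient => /lt_total/orP[lt_ij|lt_ji].
  by rewrite lt_ij (lt_gtF lt_ij) subr0.
by rewrite lt_ji (lt_gtF lt_ji) subrr.
Qed.

Lemma eq_newtU_point t t' : (forall i j : 'I_n, (i < j)%N -> t i j = t' i j) ->
  newtU_point t = newtU_point t'.
Proof. by move=> eq_t; apply: eq_bigr => i _; apply: eq_bigr => j /eq_t ->. Qed.

Lemma eq_newtU_point_orient a b :
    (forall i j : 'I_n, (i < j)%N -> (a j < a i) = (b j < b i)) ->
  newtU_point (orient a) = newtU_point (orient b).
Proof. by move=> eq_ab; apply: eq_newtU_point => i j /eq_ab; rewrite /orient => ->. Qed.

Lemma NewtU_orient a : @NewtU R n (newtU_point (orient a)).
Proof.
by exists (orient a); split=> // i j _; rewrite /orient; case: ifP; rewrite ?lexx ?ler01.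
Qed.

Lemma dotv_newtU_point c t : dotv c (newtU_point t) =
  \sum_(i < n) \sum_(j < n | (i < j)%N)
     (c 0 (lshift n j) + c 0 (rshift n i) + t i j * (gap c i - gap c j)).
Proof.
rewrite dotv_sum; apply: eq_bigr => i _; rewrite dotv_sum; apply: eq_bigr => j _.
by rewrite !(dotvD, dotvZ) !dotv_delta /gap; ring.
Qed.

Lemma dotv_le_orient c t : unit_weights t ->
  dotv c (newtU_point t) <= dotv c (newtU_point (orient (gap c))).
Proof.
move=> t01; rewrite !dotv_newtU_point; apply: ler_sum => i _; apply: ler_sum => j i_lt_j.
by rewrite lerD2l; apply: ler_step_mul; apply: t01.
Qed.

Lemma dotv_lt_orient c t : injective (gap c) -> unit_weights t ->
  newtU_point t != newtU_point (orient (gap c)) ->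
  dotv c (newtU_point t) < dotv c (newtU_point (orient (gap c))).
Proof.
move=> gap_inj t01 t_neq.
have /existsP[i /existsP[j /andP[i_lt_j tij_neq]]] :
    [exists i : 'I_n, exists j : 'I_n, (i < j)%N && (t i j != orient (gap c) i j)].
  apply: contraNT t_neq => /existsPn t_eq; apply/eqP/eq_newtU_point => i j i_lt_j.
  by move/existsPn/(_ j): (t_eq i); rewrite i_lt_j negbK => /eqP.
rewrite !dotv_newtU_point; apply: (ltr_sum_pairs i_lt_j) => [i' j' i'_lt_j'|].
  by rewrite lerD2l; apply: ler_step_mul; apply: t01.
rewrite ltrD2l; apply: ltr_step_mul => //; first exact: t01.
by rewrite (inj_eq gap_inj) neq_ltn i_lt_j.
Qed.

Lemma newtU_point_orient a : injective a ->
  newtU_point (orient a) = \sum_(i < n) \sum_(j < n) orient a i j *: (eL R i + eR R j).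
Proof.
move=> a_inj; rewrite -sum_pairs_sym => [|i]; last by rewrite orient_diag scale0r.
apply: eq_bigr => i _; apply: eq_bigr => j i_lt_j.
by rewrite orientN // (inj_eq a_inj) neq_ltn i_lt_j.
Qed.

Lemma row_mx_sum_delta (u v : 'rV[R]_n) :
  row_mx u v = \sum_(i < n) u 0 i *: eL R i + \sum_(j < n) v 0 j *: eR R j.
Proof.
rewrite [LHS]row_sum_delta big_split_ord /=.
by congr (_ + _); apply: eq_bigr => k _; rewrite (row_mxEl, row_mxEr).
Qed.

Definition perm_score (p : 'S_n) (k : 'I_n) : R := (p k)%:R.

Lemma perm_score_inj p : injective (perm_score p).
Proof. by move=> i j /eqP; rewrite eqr_nat => /eqP/val_inj/perm_inj. Qed.

Lemma sum_orient_perm_row p i : \sum_(j < n) orient (perm_score p) i j = (p i)%:R.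
Proof.
rewrite -(sum_indicator_lt _ (ltnW (ltn_ord (p i)))) [RHS](reindex_inj (@perm_inj _ p)).
by apply: eq_bigr => j _; rewrite /orient ltr_nat.
Qed.

Lemma sum_orient_perm_col p j : \sum_(i < n) orient (perm_score p) i j = (n - (p j).+1)%:R.
Proof.
rewrite -(sum_indicator_gt _ (ltn_ord (p j))) [RHS](reindex_inj (@perm_inj _ p)).
by apply: eq_bigr => i _; rewrite /orient ltr_nat.
Qed.

Lemma perm_pointE p : perm_point R p = newtU_point (orient (perm_score p)).
Proof.
rewrite newtU_point_orient; last exact: perm_score_inj.
under eq_bigr do under eq_bigr do rewrite scalerDr.
under eq_bigr do rewrite big_split /= -scaler_suml.
rewrite big_split /= [X in _ + X]exchange_big /=.
under [X in _ + X]eq_bigr do rewrite -scaler_suml.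
rewrite /perm_point -row_mx_const opp_row_mx add_row_mx row_mx_sum_delta.
congr (_ + _); apply: eq_bigr => k _; rewrite !mxE.
  by rewrite sum_orient_perm_row -natr1 addrK.
by rewrite sum_orient_perm_col subSS -(subnSK (ltn_ord (p k))) -natr1 addrK.
Qed.

Definition perm_functional (p : 'S_n) : 'rV[R]_(n + n) := row_mx (\row_k perm_score p k) 0.

Lemma gap_perm_functional p k : gap (perm_functional p) k = perm_score p k.
Proof. by rewrite /gap row_mxEl row_mxEr !mxE subr0. Qed.

End NewtonPolytope.

Arguments perm_score {R n} p k.
Arguments perm_functional {R n} p.

Theorem mainTheorem4 (R : realType) (n : nat) (hn : (1 <= n)%N) :
  forall x : 'rV[R]_(n + n),
    is_vertex (@NewtU R n) x <-> exists p : 'S_n, x = @perm_point R n p.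
Proof.
move=> x; split.
- move=> [[t [t01 ->]] [c]]; rewrite -/(newtU_point t) => c_max.
  have [p p_rank] := perm_rank (gap c).
  exists p; rewrite perm_pointE (eq_newtU_point_orient (b := gap c)) => [|i j i_lt_j].
    apply: contraTeq (dotv_le_orient c t01) => t_neq; rewrite -ltNge.
    by apply: (c_max _ (NewtU_orient _)); apply/eqP; rewrite eq_sym.
  by rewrite ltr_nat p_rank.
- move=> [p ->]; rewrite perm_pointE; split; first exact: NewtU_orient.
  exists (perm_functional p) => y [t [t01 ->]]; rewrite -/(newtU_point t).
  rewrite (eq_newtU_point_orient (b := gap (perm_functional p))) => [t_neq|i j _].
    apply: dotv_lt_orient => //; last exact/eqP.
    by move=> i j; rewrite !gap_perm_functional => /perm_score_inj.
  by rewrite !gap_perm_functional.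
Qed.
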